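(* For every instance $(A,C,k)$ there exist committees $W$ and $W'$, each with representation ratio at least $\frac34$, such that $W$ satisfies EJR+ and $W'$ satisfies FJR.
   Context: An instance $(A,C,k)$ consists of a finite nonempty candidate set $C$, voters $N=\{1,\dots,n\}$, approval sets $A_i\subseteq C$, and a committee size $1\le k\le|C|$. A committee is $W\subseteq C$ with $|W|\le k$. $\mathrm{cov}(W)=|\{i: A_i\cap W\ne\emptyset\}|$; the representation ratio is $\mathrm{cov}(W)/\max\{\mathrm{cov}(W'):|W'|=k\}$. $W$ satisfies EJR+ if for every $\ell\in\{1,\dots,k\}$ and every $N'\subseteq N$ with $|N'|\ge\ell n/k$ and $\bigcap_{i\in N'}A_i\ne\emptyset$, either some $i\in N'$ has $|A_i\cap W|\ge\ell$ or $\bigcap_{i\in N'}A_i\subseteq W$. (Fully justified representation) For a positive integer $\beta$ and $T\subseteq C$, a group $S\subseteq N$ is weakly $(\beta,T)$-cohesive if $|S|\ge |T|\frac{n}{k}$ and $|A_i\cap T|\ge\beta$ for all $i\in S$; $W$ satisfies FJR if for every such $\beta,T$ and every weakly $(\beta,T)$-cohesive group $S$ there is $i\in S$ with $|A_i\cap W|\ge\beta$. *)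

From mathcomp Require Import all_boot.
Set Implicit Arguments. Unset Strict Implicit. Unset Printing Implicit Defensive.

Section Voting.
Variables (C : finType) (n : nat) (A : 'I_n -> {set C}) (k : nat).

Definition cov (W : {set C}) : nat := #|[set i : 'I_n | A i :&: W != set0]|.

Definition maxcov : nat := \max_(W : {set C} | #|W| == k) cov W.

(* representation ratio cov(W)/maxcov >= 3/4, written without division *)
Definition ratio_ge_3_4 (W : {set C}) : Prop := 3 * maxcov <= 4 * cov W.

Definition common (N' : {set 'I_n}) : {set C} :=
  [set c | [forall i in N', c \in A i]].

(* EJR+ ; |N'| >= l n / k  is written  |N'| * k >= l * n *)
Definition EJRplus (W : {set C}) : Prop :=
  forall (l : nat) (N' : {set 'I_n}),
    1 <= l <= k -> l * n <= #|N'| * k -> common N' != set0 ->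
    (exists2 i, i \in N' & l <= #|A i :&: W|) \/ common N' \subset W.

Definition weakly_cohesive (beta : nat) (T : {set C}) (S : {set 'I_n}) : Prop :=
  S != set0 /\ #|T| * n <= #|S| * k /\ (forall i, i \in S -> beta <= #|A i :&: T|).

Definition FJR (W : {set C}) : Prop :=
  forall (beta : nat) (T : {set C}) (S : {set 'I_n}),
    0 < beta -> weakly_cohesive beta T S ->
    exists2 i, i \in S & beta <= #|A i :&: W|.

End Voting.

From mathcomp Require Import all_boot zify.
From Stdlib Require Import Classical.
Set Implicit Arguments. Unset Strict Implicit. Unset Printing Implicit Defensive.

(* Both committees are built greedily, scanning the levels l = k, ..., 1 and
   repairing every violation at the current level: for EJR+ by electing a
   candidate commonly approved by an unsatisfied group of size >= l n / k, for
   FJR by electing the whole set T of an unsatisfied weakly (l, T)-cohesive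
   group. Charging each elected candidate to the group that justified it (with
   weight 1/l for EJR+, and using |T| <= |S| k / n for FJR) shows that the
   greedy committee W0 covers at least |W0| n / k voters. Such a W0 extends to
   size k with ratio >= 3/4: for s = |W0|, r = k - s and an optimal committee O,
   charging each voter newly covered by O to one approved member of O, the r
   heaviest members of O raise the coverage to at least
   (s^2 + r k) / k^2 cov(O) >= 3/4 cov(O). Both axioms survive adding
   candidates. *)

Lemma card_setIS (T : finType) (X Y Z : {set T}) :
  Y \subset Z -> #|X :&: Y| <= #|X :&: Z|.
Proof. by move=> sYZ; apply/subset_leq_card/setIS. Qed.

Lemma heavy_subset (T : finType) (w : T -> nat) (X : {set T}) (j : nat) :
  j <= #|X| -> exists2 S : {set T}, S \subset X /\ #|S| = j &
    j * \sum_(x in X) w x <= #|X| * \sum_(x in S) w x.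
Proof.
move=> /subnKC; move: (#|X| - j) => d; rewrite addnC.
elim: d j => [|d IH] j cardX; first by exists X; rewrite -cardX.
rewrite addSnnS in cardX; have [S [sSX cardS] heavyS] := IH j.+1 cardX.
have [x xS minx] : exists2 x, x \in S & {in S, forall y, w x <= w y}.
  have /card_gt0P[x0 x0S] : 0 < #|S| by rewrite cardS.
  by case: (@arg_minnP _ x0 (fun y => y \in S) w x0S) => x; exists x.
exists (S :\ x).
  by rewrite (subset_trans (subD1set S x) sSX) (cardsD1 x S) xS in cardS *; split => //; lia.
have lowS : #|S| * w x <= \sum_(y in S) w y by rewrite -sum_nat_const; apply: leq_sum.
rewrite (big_setD1 x xS) cardS /= in heavyS lowS.
nia.
Qed.

Lemma sum_card_fibres (I J : finType) (f : I -> J) (G : {set I}) (X : {set J}) :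
  \sum_(j in X) #|[set i in G | f i == j]| = #|[set i in G | f i \in X]|.
Proof.
rewrite -sum1_card (partition_big f (mem X)) => [|i]; last by rewrite inE => /andP[].
apply: eq_bigr => j Xj; rewrite -sum1_card; apply: eq_bigl => i.
by rewrite !inE; case: eqP => [->|]; rewrite ?Xj ?andbT ?andbF.
Qed.

Lemma three_quarters (k s o x z : nat) :
  0 < k -> s <= k -> s * o <= k * x -> k * x + (k - s) * o <= k * z + (k - s) * x ->
  3 * o <= 4 * z.
Proof.
move=> k_gt0 /subnKC; move: (k - s) => r def_k; subst k => hx hz.
have hz' : s * x + r * o <= (s + r) * z by lia.
have key : (s * s + (s + r) * r) * o <= (s + r) * ((s + r) * z).
  by have := leq_mul (leqnn s) hx; have := leq_mul (leqnn (s + r)) hz'; nia.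
have amgm : 3 * ((s + r) * (s + r)) <= 4 * (s * s + (s + r) * r).
  by have := (nat_Cauchy s r).1; nia.
have k2_gt0 : 0 < (s + r) * (s + r) by rewrite muln_gt0 k_gt0.
by rewrite -(leq_pmul2l k2_gt0); nia.
Qed.

Section Saturation.
Variable T : finType.

Lemma saturate (Inv bad : {set T} -> Prop) :
    (forall W, Inv W -> bad W -> exists2 W', Inv W' & W \proper W') ->
  forall W, Inv W -> exists2 W', Inv W' /\ W \subset W' & ~ bad W'.
Proof.
move=> grow W; have [m] := ubnP (#|T| - #|W|); elim: m W => // m IH W ltm invW.
have [badW|] := classic (bad W); last by exists W.
have [W1 invW1 /[dup] /proper_card ltW1 /proper_sub sW1] := grow W invW badW.
have [|W2 [invW2 sW12] goodW2] := IH W1 _ invW1.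
  by have := max_card W1; lia.
by exists W2 => //; split => //; apply: subset_trans sW12.
Qed.

Lemma saturate_levels (k : nat) (Inv bad : nat -> {set T} -> Prop) (W0 : {set T}) :
    (forall l (W W' : {set T}), W \subset W' -> bad l W' -> bad l W) ->
    (forall l W, Inv l.+1 W -> Inv l W) ->
    (forall l W, 0 < l <= k -> Inv l W -> bad l W -> exists2 W', Inv l W' & W \proper W') ->
    Inv k.+1 W0 ->
  exists2 W, Inv 1 W & forall l, 0 < l <= k -> ~ bad l W.
Proof.
move=> bad_anti inv_down grow invW0.
suff: forall j, j <= k ->
    exists2 W, Inv (k - j).+1 W & forall l, k - j < l <= k -> ~ bad l W.
  by move/(_ k (leqnn k)); rewrite subnn.
elim=> [_|j IH ltjk]; first by exists W0; rewrite ?subn0 // => l; lia.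
have [W invW goodW] := IH (ltnW ltjk).
have lvl : 0 < k - j <= k by lia.
have [W' [invW' sWW'] goodW'] := saturate (fun W => grow _ W lvl) (inv_down _ _ invW).
exists W'; first by rewrite subnSK.
move=> l /andP[ltl lek]; have [->|ltl'] := eqVneq l (k - j); first exact: goodW'.
by move/(bad_anti _ _ _ sWW'); apply: goodW; lia.
Qed.

End Saturation.

Section Committees.
Variables (C : finType) (n : nat) (A : 'I_n -> {set C}) (k : nat).

Lemma card_voters (S : {set 'I_n}) : #|S| <= n.
Proof. by apply: leq_trans (max_card _) _; rewrite card_ord. Qed.

Definition covered (W : {set C}) : {set 'I_n} := [set i | A i :&: W != set0].

Lemma cov_le (W : {set C}) : cov A W <= n.
Proof. exact: card_voters. Qed.

Lemma covered_mono (W W' : {set C}) : W \subset W' -> covered W \subset covered W'.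
Proof.
move=> sWW'; apply/subsetP => i; rewrite !inE -!card_gt0 => /leq_trans; apply.
exact: card_setIS.
Qed.

Lemma cov_gain (W0 O : {set C}) (r : nat) : r <= #|O| ->
  exists2 S : {set C}, #|S| = r &
    #|O| * cov A W0 + r * cov A O <= #|O| * cov A (W0 :|: S) + r * cov A W0.
Proof.
move=> leRO; have [->|r_gt0] := posnP r; first by exists set0; rewrite ?cards0 ?setU0.
have /card_gt0P[c0 _] : 0 < #|O| by apply: leq_trans leRO.
pose G := covered O :\: covered W0.
pose rep i := odflt c0 [pick c in A i :&: O].
have repP i : A i :&: O != set0 -> rep i \in A i :&: O.
  case/set0Pn=> c cAO; rewrite /rep.
  by case: pickP => [//|/(_ c)]; rewrite cAO.
pose w c := #|[set i in G | rep i == c]|.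
have sumO : \sum_(c in O) w c = #|G|.
  rewrite sum_card_fibres; apply: eq_card => i; rewrite !inE andb_idr //.
  by case/andP => _ /repP /setIP[].
have [S [_ cardS] heavyS] := heavy_subset w leRO.
exists S => //; rewrite sumO sum_card_fibres in heavyS.
have covO : cov A O <= cov A W0 + #|G|.
  rewrite /cov -(cardsID (covered W0) (covered O)) leq_add2r.
  by apply: subset_leq_card; apply: subsetIr.
have covS : cov A W0 + #|[set i in G | rep i \in S]| <= cov A (W0 :|: S).
  rewrite -(cardsUI (covered W0)) setIC.
  rewrite (_ : _ :&: _ = set0) ?cards0 ?addn0; last first.
    by apply/setP => i; rewrite !inE; case: (_ != set0); rewrite ?andbF.
  apply: subset_leq_card; rewrite subUset covered_mono ?subsetUl //=.
  apply/subsetP => i; rewrite !inE => /andP[/andP[_ /repP /setIP[repA _]] repS].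
  by apply/set0Pn; exists (rep i); rewrite !inE repA repS orbT.
nia.
Qed.

Lemma maxcov_attained : k <= #|C| ->
  exists2 O : {set C}, #|O| = k & maxcov A k = cov A O.
Proof.
rewrite -cardsT => leKC.
have [O0 [_ cardO0] _] := heavy_subset (fun=> 0) leKC.
have [|O] := @eq_bigmax_cond _ (fun W : {set C} => #|W| == k) (cov A).
  by apply/card_gt0P; exists O0; rewrite unfold_in /= cardO0.
by rewrite unfold_in /= => /eqP cardO maxO; exists O.
Qed.

Lemma extend_three_quarters (W0 : {set C}) :
  0 < n -> 0 < k <= #|C| -> n * #|W0| <= k * cov A W0 ->
  exists2 W : {set C}, W0 \subset W & #|W| <= k /\ ratio_ge_3_4 A k W.
Proof.
move=> n_gt0 /andP[k_gt0 leKC] dense.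
have leW0k : #|W0| <= k by have := cov_le W0; nia.
have [O cardO maxO] := maxcov_attained leKC.
have leRO : k - #|W0| <= #|O| by rewrite cardO leq_subr.
have [S cardS] := cov_gain W0 leRO; rewrite cardO => gain.
exists (W0 :|: S); first exact: subsetUl.
split; first by rewrite (leq_trans (leq_card_setU _ _)) // cardS subnKC.
rewrite /ratio_ge_3_4 maxO; apply: (three_quarters k_gt0 leW0k _ gain).
by have := cov_le O; nia.
Qed.

Lemma EJRplus_mono (W W' : {set C}) : W \subset W' -> EJRplus A k W -> EJRplus A k W'.
Proof.
move=> sWW' ejrW l N' lvl sizeN cN; case: (ejrW l N' lvl sizeN cN) => [[i iN hi]|sNW].
  by left; exists i => //; apply: leq_trans hi (card_setIS _ sWW').
by right; apply: subset_trans sNW sWW'.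
Qed.

Lemma FJR_mono (W W' : {set C}) : W \subset W' -> FJR A k W -> FJR A k W'.
Proof.
move=> sWW' fjrW b T S b_gt0 coh; have [i iS hi] := fjrW b T S b_gt0 coh.
by exists i => //; apply: leq_trans hi (card_setIS _ sWW').
Qed.

Definition load (W : {set C}) (grp : C -> {set 'I_n}) (i : 'I_n) : nat :=
  #|[set c in W | i \in grp c]|.

(* [lev c] is the level at which [c] was elected and [grp c] the group that
   justified its election. *)
Definition ejr_witness (W : {set C}) (lev : C -> nat) (grp : C -> {set 'I_n}) : Prop :=
  {in W, forall c, [/\ 0 < lev c <= k, lev c * n <= #|grp c| * k &
                      {in grp c, forall i, c \in A i}]} /\
  {in W, forall c, {in grp c, forall i, load W grp i <= lev c}}.

Lemma ejr_witness_cov (W : {set C}) lev grp :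
  ejr_witness W lev grp -> n * #|W| <= k * cov A W.
Proof.
(* Weight 1/lev c is scaled to L %/ lev c, exact since L = k`! is a multiple of every level. *)
move=> [levP loadP]; set L := k`!.
have L_gt0 : 0 < L := fact_gt0 k.
have lower : n * L * #|W| <= k * \sum_(c in W) #|grp c| * (L %/ lev c).
  rewrite mulnC -sum_nat_const big_distrr /= leq_sum // => c /levP[/andP[lev_gt0 lek] sizeP _].
  have /divnK {1}<- : lev c %| L by rewrite dvdn_fact ?lev_gt0.
  by rewrite mulnCA mulnC mulnCA mulnA [n * _]mulnC leq_mul.
have swap : \sum_(c in W) #|grp c| * (L %/ lev c) =
            \sum_(i in covered W) \sum_(c | (c \in W) && (i \in grp c)) L %/ lev c.
  under eq_bigr do rewrite -sum_nat_const.
  apply: exchange_big_dep => c i cW igrp; rewrite inE.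
  have [_ _ /(_ i igrp) cAi] := levP c cW.
  by apply/set0Pn; exists c; rewrite inE cAi.
have perVoter i : \sum_(c | (c \in W) && (i \in grp c)) L %/ lev c <= L.
  apply: leq_trans (_ : \sum_(c | (c \in W) && (i \in grp c)) L %/ load W grp i <= _).
    apply: leq_sum => c /andP[cW igrp]; apply: leq_div2l (loadP c cW i igrp).
    by rewrite card_gt0; apply/set0Pn; exists c; rewrite inE cW.
  by rewrite sum_nat_cond_const mulnC leq_divM.
have upper : \sum_(c in W) #|grp c| * (L %/ lev c) <= L * cov A W.
  by rewrite swap mulnC -sum_nat_const leq_sum.
by rewrite -(leq_pmul2l L_gt0); have := leq_mul (leqnn k) upper; nia.
Qed.

Definition ejr_violation (l : nat) (W : {set C}) : Prop :=
  exists (N' : {set 'I_n}) c, [/\ l * n <= #|N'| * k, c \in common A N', c \notin W &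
                   {in N', forall i, #|A i :&: W| < l}].

Lemma ejr_violation_anti l (W W' : {set C}) :
  W \subset W' -> ejr_violation l W' -> ejr_violation l W.
Proof.
move=> sWW' [N' [c [sizeN cN cW' lowN]]]; exists N', c; split => //.
  by apply: contra cW'; apply: (subsetP sWW').
by move=> i /lowN; apply: leq_ltn_trans (card_setIS _ sWW').
Qed.

Lemma EJRplus_of_no_violation (W : {set C}) :
  (forall l, 0 < l <= k -> ~ ejr_violation l W) -> EJRplus A k W.
Proof.
move=> good l N' lvl sizeN _.
have [/exists_inP[i iN hi]|/exists_inPn none] := boolP [exists i in N', l <= #|A i :&: W|].
  by left; exists i.
right; apply/subsetP => c cN; apply/negPn/negP => cW.
by apply: (good l lvl); exists N', c; split => // i /none; rewrite ltnNge.
Qed.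

Definition ejr_invariant (l : nat) (W : {set C}) : Prop :=
  exists lev grp, ejr_witness W lev grp /\ {in W, forall c, l <= lev c}.

Lemma load_setU1 (W : {set C}) (grp : C -> {set 'I_n}) c (N' : {set 'I_n}) i :
  load (c |: W) (fun x => if x == c then N' else grp x) i <= (i \in N') + load W grp i.
Proof.
rewrite /load; case: (boolP (i \in N')) => iN.
  apply: leq_trans (_ : #|c |: [set x in W | i \in grp x]| <= _).
    by apply/subset_leq_card/subsetP => x; rewrite !inE; case: eqP => [-> //|_] /=.
  by rewrite cardsU1 leq_add2r leq_b1.
apply/subset_leq_card/subsetP => x; rewrite !inE.
by case: eqP => [->|_] /=; rewrite ?(negbTE iN) ?andbF.
Qed.

Lemma load_le_approved (W : {set C}) (grp : C -> {set 'I_n}) :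
  {in W, forall c, {in grp c, forall i, c \in A i}} ->
  forall i, load W grp i <= #|A i :&: W|.
Proof.
move=> grpA i; apply/subset_leq_card/subsetP => c; rewrite !inE => /andP[cW igrp].
by rewrite cW grpA.
Qed.

Lemma ejr_grow l (W : {set C}) : 0 < l <= k -> ejr_invariant l W -> ejr_violation l W ->
  exists2 W', ejr_invariant l W' & W \proper W'.
Proof.
move=> lvl [lev [grp [[levP loadP] lev_ge]]] [N' [c [sizeN cN cW lowN]]].
have cA : {in N', forall i, c \in A i}.
  by move=> i iN; move: cN; rewrite inE => /forall_inP; apply.
pose lev' x := if x == c then l else lev x.
pose grp' x := if x == c then N' else grp x.
exists (c |: W); last by apply: properUr; rewrite sub1set.
exists lev', grp'; split; first split.
- move=> x; rewrite !inE /lev' /grp'; case: eqP => [-> _|_ /= xW]; first by split.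
  exact: levP.
- move=> x xW' i; have := load_setU1 W grp c N' i.
  case: (boolP (i \in N')) => [iN load' _|iN load'].
    apply: leq_trans load' _; apply: leq_trans (_ : l <= _).
      rewrite add1n; apply: leq_ltn_trans (lowN i iN).
      by apply: load_le_approved => y /levP[].
    by move: xW'; rewrite !inE /lev'; case: eqP => // _ /lev_ge.
  move: xW'; rewrite !inE /grp' /lev'.
  case: eqP => [_ _|_ /= xW igrp]; first by rewrite (negbTE iN).
  by apply: leq_trans load' _; exact: loadP.
- by move=> x; rewrite !inE /lev'; case: eqP => // _ /lev_ge.
Qed.

Lemma ejr_committee : exists2 W : {set C}, EJRplus A k W & n * #|W| <= k * cov A W.
Proof.
have [W [lev [grp [wit _]]] good] :
    exists2 W, ejr_invariant 1 W & forall l, 0 < l <= k -> ~ ejr_violation l W.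
  apply: (@saturate_levels _ _ _ _ set0 ejr_violation_anti _ ejr_grow).
    by move=> l W [lev [grp [wit ge]]]; exists lev, grp; split => // c /ge /ltnW.
  by exists (fun=> k.+1), (fun=> set0); split; first split; move=> c; rewrite inE.
by exists W; [exact: EJRplus_of_no_violation | exact: ejr_witness_cov wit].
Qed.

Definition fjr_violation (b : nat) (W : {set C}) : Prop :=
  exists T S, weakly_cohesive A k b T S /\ {in S, forall i, #|A i :&: W| < b}.

Lemma fjr_violation_anti b (W W' : {set C}) :
  W \subset W' -> fjr_violation b W' -> fjr_violation b W.
Proof.
move=> sWW' [T [S [coh lowS]]]; exists T, S; split => // i /lowS.
exact: leq_ltn_trans (card_setIS _ sWW').
Qed.

Lemma weakly_cohesive_le_k b (T : {set C}) S : 0 < n -> weakly_cohesive A k b T S -> b <= k.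
Proof.
move=> n_gt0 [/set0Pn[i iS] [sizeT /(_ i iS) leb]].
have := card_voters S.
have := leq_trans leb (subset_leq_card (subsetIr (A i) T)); nia.
Qed.

Lemma FJR_of_no_violation (W : {set C}) : 0 < n ->
  (forall b, 0 < b <= k -> ~ fjr_violation b W) -> FJR A k W.
Proof.
move=> n_gt0 good b T S b_gt0 coh.
have [/exists_inP[i iS hi]|/exists_inPn none] := boolP [exists i in S, b <= #|A i :&: W|].
  by exists i.
have lvl : 0 < b <= k by rewrite b_gt0 (weakly_cohesive_le_k n_gt0 coh).
by case: (good b lvl); exists T, S; split => // i /none; rewrite ltnNge.
Qed.

Definition fjr_invariant (b : nat) (W : {set C}) : Prop :=
  exists U : {set 'I_n}, n * #|W| <= k * #|U| /\ {in U, forall i, b <= #|A i :&: W|}.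

Lemma fjr_grow b (W : {set C}) : fjr_invariant b W -> fjr_violation b W ->
  exists2 W', fjr_invariant b W' & W \proper W'.
Proof.
move=> [U [sizeU highU]] [T [S [[/set0Pn[i0 i0S] [sizeT highS]] lowS]]].
have disjSU : [disjoint S & U].
  apply/pred0P => i /=; apply/negbTE/andP => -[/lowS low /highU high].
  by have := leq_ltn_trans high low; rewrite ltnn.
exists (W :|: T).
  exists (S :|: U); split.
    have := cardsUI S U; rewrite disjoint_setI0 // cards0 addn0 => ->.
    by have := (leq_card_setU W T).1; nia.
  move=> i; rewrite inE => /orP[/highS|/highU] /leq_trans; apply; apply: card_setIS.
    exact: subsetUr.
  exact: subsetUl.
apply: properUl; apply: contraL (lowS i0 i0S) => sTW.
by rewrite -leqNgt (leq_trans (highS i0 i0S)) ?card_setIS.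
Qed.

Lemma fjr_committee : 0 < n -> exists2 W : {set C}, FJR A k W & n * #|W| <= k * cov A W.
Proof.
move=> n_gt0.
have [W [U [sizeU highU]] good] :
    exists2 W, fjr_invariant 1 W & forall b, 0 < b <= k -> ~ fjr_violation b W.
  apply: (@saturate_levels _ _ _ _ set0 fjr_violation_anti _ (fun b W _ => @fjr_grow b W)).
    by move=> b W [U [sizeU highU]]; exists U; split => // i /highU /ltnW.
  by exists set0; rewrite !cards0 !muln0; split => // i; rewrite inE.
exists W; first exact: FJR_of_no_violation.
apply: leq_trans sizeU _; rewrite leq_mul2l; apply/orP; right.
by apply/subset_leq_card/subsetP => i /highU; rewrite inE card_gt0.
Qed.

End Committees.

Theorem corollary4 (C : finType) (n : nat) (A : 'I_n -> {set C}) (k : nat) :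
  0 < #|C| -> 0 < n -> 1 <= k <= #|C| ->
  exists W W' : {set C},
    (#|W| <= k /\ ratio_ge_3_4 A k W /\ EJRplus A k W) /\
    (#|W'| <= k /\ ratio_ge_3_4 A k W' /\ FJR A k W').
Proof.
move=> _ n_gt0 kP.
have [E0 ejrE0 denseE0] := ejr_committee A k.
have [F0 fjrF0 denseF0] := fjr_committee A k n_gt0.
have [E sE0E [sizeE ratioE]] := extend_three_quarters n_gt0 kP denseE0.
have [F sF0F [sizeF ratioF]] := extend_three_quarters n_gt0 kP denseF0.
exists E, F; split; split => //; split => //.
- exact: EJRplus_mono sE0E ejrE0.
- exact: FJR_mono sF0F fjrF0.
Qed.
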